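(* Let $R$ be an associative ring and let $S=\begin{pmatrix}A&B\\ C&D\end{pmatrix}$ be a non-commuting switch over $R$. Let $Q=(1-A)(1-D)$ and let $S'=\begin{pmatrix}0&1\\ Q&1-Q\end{pmatrix}$. For $n\geq 2$ let $M$ be the $n\times n$ matrix over $R$ with $M_{11}=1$, $M_{1c}=0$ for $c>1$, and for $r\geq 2$: $M_{rc}=B^{c-1}A$ for $1\le c<r$, $M_{rr}=B^{r-1}$, $M_{rc}=0$ for $c>r$ (so each row after the first starts with $A$ followed by $B$ times the previous row). Then $M$ is invertible and $\rho(S,n)=M^{-1}\rho(S',n)M$, i.e. for each $i=1,\dots,n-1$, $$I_{i-1}\oplus S\oplus I_{n-i-1}=M^{-1}\,(I_{i-1}\oplus S'\oplus I_{n-i-1})\,M.$$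
   Context: A non-commuting switch over $R$ is $S=\begin{pmatrix}A&B\\ C&D\end{pmatrix}$ where $A$, $A-1$, $B$ are invertible elements of $R$ that do not commute and satisfy the fundamental equation $A^{-1}B^{-1}AB-BA^{-1}B^{-1}A=B^{-1}AB-A$, and $C=A^{-1}B^{-1}A(1-A)$, $D=1-A^{-1}B^{-1}AB$. For a $2\times 2$ matrix $S$ over $R$, $\rho(S,n)$ is the assignment sending the standard braid generator $\sigma_i$ ($1\le i\le n-1$) to the $n\times n$ block-diagonal matrix $I_{i-1}\oplus S\oplus I_{n-i-1}$. *)

From HB Require Import structures.
From mathcomp Require Import all_boot all_order all_algebra.
Set Implicit Arguments. Unset Strict Implicit. Unset Printing Implicit Defensive.
Import Order.TTheory GRing.Theory.
Local Open Scope ring_scope.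

Definition mx2 (R : pzRingType) (a b c d : R) : 'M[R]_2 :=
  \matrix_(i < 2, j < 2)
     if (val i == 0%N) then (if (val j == 0%N) then a else b)
     else (if (val j == 0%N) then c else d).

Definition is_nc_switch (R : unitRingType) (A B C D : R) : Prop :=
  [/\ A \is a GRing.unit, (A - 1) \is a GRing.unit, B \is a GRing.unit
    & A * B != B * A] /\
  [/\ A^-1 * B^-1 * A * B - B * A^-1 * B^-1 * A = B^-1 * A * B - A,
      C = A^-1 * B^-1 * A * (1 - A)
    & D = 1 - A^-1 * B^-1 * A * B].

(* rho(S,n)(sigma_i) = I_{i-1} (+) S (+) I_{n-i-1}, for 1 <= i <= n-1.
   Indices j,k are 0-based: the block S occupies rows/columns i-1 and i. *)
Definition rho (R : pzRingType) (n : nat) (S : 'M[R]_2) (i : nat) : 'M[R]_n :=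
  \matrix_(j < n, k < n)
    if [&& (i.-1 <= j)%N, (j <= i)%N, (i.-1 <= k)%N & (k <= i)%N]
    then S (inord (j - i.-1)) (inord (k - i.-1))
    else (j == k)%:R.

(* The matrix M (0-based indices r, c): row 0 is (1,0,...,0); for r >= 1,
   M r c = B^c A for c < r, M r r = B^r, and 0 for c > r.
   (Paper, 1-based: M_{rc} = B^{c-1} A for c < r, M_{rr} = B^{r-1}.) *)
Definition Mmat (R : pzRingType) (A B : R) (n : nat) : 'M[R]_n :=
  \matrix_(r < n, c < n)
    if (val r == 0%N) then (val c == 0%N)%:R
    else if (c < r)%N then B ^+ c * A
    else if (val c == val r) then B ^+ r
    else 0.

(* M is lower triangular with diagonal 1, B, ..., B^(n-1), hence invertible.
   Multiplying by the block matrix rho(S, n)(sigma_i) on the right only changes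
   columns i-1 and i of M, and multiplying by rho(S', n)(sigma_i) on the left
   only changes rows i-1 and i; comparing the entries of M rho(S) and
   rho(S') M there, and factoring out B^(i-1), leaves five identities in R:
   A A + B A C = A,  A B + B A D = B A,  A A + B C = Q + (1 - Q) A,
   A B + B D = (1 - Q) B  and  Q B = B Q.  The first two come from the formulas
   for C and D; the others use the fundamental equation, which says exactly
   that Q = B A^-1 B^-1 A - A. *)

From HB Require Import structures.
From mathcomp Require Import all_boot all_order all_algebra.
From mathcomp Require Import zify.

Set Implicit Arguments.
Unset Strict Implicit.
Unset Printing Implicit Defensive.

Import GRing.Theory.
Local Open Scope ring_scope.

Section LowerTriangularInverse.
Variable R : unitRingType.

Lemma mulmx_lblock_inv m1 m2 (A Ai : 'M[R]_m1) (D Di : 'M[R]_m2) (C : 'M[R]_(m2, m1)) :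
  Ai *m A = 1%:M -> A *m Ai = 1%:M -> Di *m D = 1%:M -> D *m Di = 1%:M ->
  let X := block_mx Ai 0 (- (Di *m C *m Ai)) Di in
  X *m block_mx A 0 C D = 1%:M /\ block_mx A 0 C D *m X = 1%:M.
Proof.
move=> AiA AAi DiD DDi X; rewrite !mulmx_block (scalar_mx_block m1 m2 1).
rewrite !mul0mx !mulmx0 !addr0 !add0r AiA AAi DiD DDi; split; congr block_mx.
- by rewrite mulNmx -!mulmxA AiA mulmx1 addNr.
- by rewrite mulmxN !mulmxA DDi mul1mx addrN.
Qed.

Lemma trig_mx_invertible n (M : 'M[R]_n) :
  is_trig_mx M -> (forall i, M i i \is a GRing.unit) ->
  exists N : 'M[R]_n, N *m M = 1%:M /\ M *m N = 1%:M.
Proof.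
move=> Mtrig; elim/trigsqmx_ind: n M / Mtrig => [|n x C A _ IH] unit_diag.
  by exists 0; split; apply/matrixP => -[].
have [Ai [AiA AAi]] : exists Ai, Ai *m A = 1%:M /\ A *m Ai = 1%:M.
  by apply: IH => i; have := unit_diag (rshift 1 i); rewrite block_mxEdr.
have ux : x 0 0 \is a GRing.unit by have := unit_diag (lshift n 0); rewrite block_mxEul.
have [xix xxi] : (x 0 0)^-1%:M *m x = 1%:M /\ x *m (x 0 0)^-1%:M = 1%:M.
  by rewrite [x]mx11_scalar -!scalar_mxM !mxE eqxx mulr1n mulVr ?mulrV.
have [XM MX] := mulmx_lblock_inv C xix xxi AiA AAi.
by eexists; split; [exact: XM | exact: MX].
Qed.

End LowerTriangularInverse.

Section RhoBlock.
Variables (R : pzRingType) (n p : nat) (S : 'M[R]_2).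
Hypothesis lt_p1_n : (p.+1 < n)%N.

Lemma block_idx_subproof (k : 'I_2) : (p + k < n)%N.
Proof. by have := ltn_ord k; lia. Qed.

Definition block_idx (k : 'I_2) : 'I_n := Ordinal (block_idx_subproof k).

Definition off_block (j : 'I_n) : bool := (j < p)%N || (p.+1 < j)%N.

Variant block_spec (j : 'I_n) : Prop :=
  | InBlock k of j = block_idx k
  | OffBlock of off_block j.

Lemma blockP (j : 'I_n) : block_spec j.
Proof.
have [/orP[/eqP j_p|/eqP j_p1]|j_off] := boolP ((j == p :> nat) || (j == p.+1 :> nat)).
- by apply: (@InBlock _ 0); apply: val_inj; rewrite /= addn0.
- by apply: (@InBlock _ 1); apply: val_inj; rewrite /= addn1.
- by apply: OffBlock; rewrite /off_block; lia.
Qed.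

Local Notation rho_p := (rho n S p.+1).

Lemma rho_block (j k : 'I_2) : rho_p (block_idx j) (block_idx k) = S j k.
Proof.
rewrite mxE /= !addKn !inord_val ifT //.
by have := ltn_ord j; have := ltn_ord k; lia.
Qed.

Lemma rho_off_row (j k : 'I_n) : off_block j -> rho_p j k = (j == k)%:R.
Proof. by rewrite /off_block mxE /= => j_off; rewrite ifF //; lia. Qed.

Lemma rho_off_col (j k : 'I_n) : off_block k -> rho_p j k = (j == k)%:R.
Proof. by rewrite /off_block mxE /= => k_off; rewrite ifF //; lia. Qed.

Lemma off_block_neq (j : 'I_n) (k : 'I_2) : off_block j -> (j == block_idx k) = false.
Proof. by have := ltn_ord k; rewrite /off_block => ? ?; apply/eqP => /(congr1 val) /=; lia. Qed.

Lemma sum_block (F : 'I_n -> R) :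
  (forall j, off_block j -> F j = 0) -> \sum_j F j = F (block_idx 0) + F (block_idx 1).
Proof.
move=> F_off; rewrite (bigD1 (block_idx 0)) // (bigD1 (block_idx 1)) /=; last first.
  by apply/eqP => /(congr1 val) /=; lia.
rewrite big1 ?addr0 // => j /andP[j0 j1]; apply: F_off.
by move: j0 j1; rewrite /off_block -!val_eqE /=; lia.
Qed.

Lemma mulmx_rho_block (X : 'M[R]_n) r (k : 'I_2) :
  (X *m rho_p) r (block_idx k) = X r (block_idx 0) * S 0 k + X r (block_idx 1) * S 1 k.
Proof.
rewrite mxE sum_block => [|j j_off]; first by rewrite !rho_block.
by rewrite rho_off_row // off_block_neq // mulr0.
Qed.

Lemma mul_rho_mx_block (X : 'M[R]_n) (k : 'I_2) c :
  (rho_p *m X) (block_idx k) c = S k 0 * X (block_idx 0) c + S k 1 * X (block_idx 1) c.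
Proof.
rewrite mxE sum_block => [|j j_off]; first by rewrite !rho_block.
by rewrite rho_off_col // eq_sym off_block_neq // mul0r.
Qed.

Lemma mulmx_rho_off (X : 'M[R]_n) r c : off_block c -> (X *m rho_p) r c = X r c.
Proof.
move=> c_off; rewrite mxE (bigD1 c) //= rho_off_col // eqxx mulr1 big1 ?addr0 //.
by move=> j /negbTE j_c; rewrite rho_off_col // j_c mulr0.
Qed.

Lemma mul_rho_mx_off (X : 'M[R]_n) r c : off_block r -> (rho_p *m X) r c = X r c.
Proof.
move=> r_off; rewrite mxE (bigD1 r) //= rho_off_row // eqxx mul1r big1 ?addr0 //.
by move=> j /negbTE j_r; rewrite rho_off_row // eq_sym j_r mul0r.
Qed.

End RhoBlock.

Ltac decide_ifs := repeat match goal with |- context [if ?b then _ else _] =>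
  first [ rewrite (_ : b = true); last by lia
        | rewrite (_ : b = false); last by apply/negbTE/negP; lia ] end.

Lemma MmatE (R : pzRingType) (A B : R) n (r c : 'I_n) :
  Mmat A B n r c = if (c < r)%N then B ^+ c * A else if (r < c)%N then 0 else B ^+ r.
Proof.
rewrite mxE /=; case: (posnP r) => [r0|_]; last by case: ltngtP.
rewrite r0 ltn0 expr0.
by case: (posnP c).
Qed.

Section Intertwining.
Variables (R : pzRingType) (A B C D Q : R).
Hypotheses (eq_col0 : A * A + B * A * C = A) (eq_col1 : A * B + B * A * D = B * A).
Hypotheses (eq_diag0 : A * A + B * C = Q + (1 - Q) * A) (eq_diag1 : A * B + B * D = (1 - Q) * B).
Hypothesis commQB : GRing.comm Q B.

Lemma Mmat_rho_intertwine n p : (p.+1 < n)%N ->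
  Mmat A B n *m rho n (mx2 A B C D) p.+1 = rho n (mx2 0 1 Q (1 - Q)) p.+1 *m Mmat A B n.
Proof.
move=> lt_p1_n; apply/matrixP => r c.
have commBpQ : GRing.comm (B ^+ p) Q by apply/commr_sym/commrX.
have commBpQ' : GRing.comm (B ^+ p) (1 - Q) by apply: commrB (commr1 _) commBpQ.
have [a ->|r_off] := blockP lt_p1_n r; have [b ->|c_off] := blockP lt_p1_n c.
- rewrite mulmx_rho_block mul_rho_mx_block !MmatE !mxE /=.
  case: a => -[|[|//]] ?; case: b => -[|[|//]] ? /=; decide_ifs;
    rewrite ?addn0 ?addn1 ?mul0r ?mul1r ?mulr0 ?mulr1 ?addr0 ?add0r ?exprSr //.
  + by rewrite -!mulrA -mulrDr eq_diag0 mulrDr commBpQ !mulrA commBpQ'.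
  + by rewrite -!mulrA -mulrDr eq_diag1 !mulrA commBpQ'.
- rewrite mul_rho_mx_block mulmx_rho_off // !MmatE !mxE /=.
  case/orP: c_off => c_off; case: a => -[|[|//]] ? /=; decide_ifs;
    rewrite ?mul0r ?mul1r ?mulr0 ?addr0 ?add0r //.
  by rewrite -mulrDl addrC subrK mul1r.
- rewrite mulmx_rho_block mul_rho_mx_off // !MmatE !mxE /=.
  case/orP: r_off => r_off; case: b => -[|[|//]] ? /=; decide_ifs;
    rewrite ?mul0r ?mulr0 ?addr0 ?addn0 ?addn1 //.
  + by rewrite exprSr -!mulrA -mulrDr [B * (A * C)]mulrA eq_col0.
  + by rewrite exprSr -!mulrA -mulrDr [B * (A * D)]mulrA eq_col1.
- by rewrite mulmx_rho_off // mul_rho_mx_off.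
Qed.

End Intertwining.

Section SwitchIdentities.
Variables (R : unitRingType) (A B C D : R).
Hypotheses (unitA : A \is a GRing.unit) (unitB : B \is a GRing.unit).
Hypothesis fundamental :
  A^-1 * B^-1 * A * B - B * A^-1 * B^-1 * A = B^-1 * A * B - A.
Hypotheses (defC : C = A^-1 * B^-1 * A * (1 - A)) (defD : D = 1 - A^-1 * B^-1 * A * B).

Local Notation Q := ((1 - A) * (1 - D)).

Lemma switch_col0 : A * A + B * A * C = A.
Proof. by rewrite defC -!mulrA (mulVKr unitA) (mulVKr unitB) mulrBr mulr1 addrC addrNK. Qed.

Lemma switch_col1 : A * B + B * A * D = B * A.
Proof. by rewrite defD mulrBr mulr1 -!mulrA (mulVKr unitA) (mulVKr unitB) addrC addrNK. Qed.

Lemma switch_QE : Q = A^-1 * B^-1 * A * B - B^-1 * A * B.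
Proof. by rewrite defD opprB subrKC mulrBl mul1r !mulrA mulrV // mul1r. Qed.

Lemma switch_QE_fundamental : Q = B * A^-1 * B^-1 * A - A.
Proof.
move/eqP: fundamental; rewrite subr_eq => /eqP fund.
by rewrite switch_QE fund -addrA addrC subrKA.
Qed.

Lemma switch_comm_QB : GRing.comm Q B.
Proof.
rewrite /GRing.comm {1}switch_QE_fundamental switch_QE mulrBl mulrBr.
by rewrite !mulrA (mulrV unitB) mul1r.
Qed.

Lemma switch_diag0 : A * A + B * C = Q + (1 - Q) * A.
Proof.
rewrite switch_QE_fundamental defC !mulrA mulrBr mulr1 mulrBl mul1r mulrBl.
by rewrite opprB subrKA addrCA.
Qed.

Lemma switch_diag1 : A * B + B * D = (1 - Q) * B.
Proof.
rewrite switch_QE_fundamental defD mulrBr mulr1 !mulrBl mul1r !mulrA.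
by rewrite addrCA opprB.
Qed.

End SwitchIdentities.

Theorem lemma2p2 (R : unitRingType) (A B C D : R) (n : nat) :
  is_nc_switch A B C D -> (2 <= n)%N ->
  let Q := (1 - A) * (1 - D) in
  let S := mx2 A B C D in
  let S' := mx2 0 1 Q (1 - Q) in
  let M := Mmat A B n in
  exists Minv : 'M[R]_n,
    [/\ Minv *m M = 1%:M, M *m Minv = 1%:M &
        forall i : nat, (1 <= i <= n.-1)%N ->
          rho n S i = Minv *m rho n S' i *m M].
Proof.
move=> [[unitA _ unitB _] [fundamental defC defD]] _ Q S S' M.
have M_trig : is_trig_mx M.
  by apply/is_trig_mxP => i j lt_ij; rewrite MmatE ltnNge (ltnW lt_ij) lt_ij.
have M_diag_unit (i : 'I_n) : M i i \is a GRing.unit by rewrite MmatE ltnn unitrX.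
have [Minv [MinvM MMinv]] := trig_mx_invertible M_trig M_diag_unit.
exists Minv; split => // -[//|p] /andP[_ le_p1_n1].
have lt_p1_n : (p.+1 < n)%N by lia.
have intertwine : M *m rho n S p.+1 = rho n S' p.+1 *m M.
  apply: Mmat_rho_intertwine lt_p1_n.
  - exact: switch_col0.
  - exact: switch_col1.
  - exact: switch_diag0.
  - exact: switch_diag1.
  - exact: switch_comm_QB.
by rewrite -mulmxA -intertwine mulmxA MinvM mul1mx.
Qed.
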